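(* Let the graph inverse semigroup $G(T)$ of the unary tree $T$ be a dense subsemigroup of a CLP-compact topological semigroup $S$. Then for every open neighborhood $U$ of $0$ in $S$ there exists $n\in\omega$ such that $L_k\subset U$ for every $k>n$.
   Context: All spaces are Hausdorff; CLP-compact means every cover by clopen sets has a finite subcover. The unary tree $T$ has vertex set $\omega$ and edges $(n,n+1)$ with source $n$ and range $n+1$. For $k\le p$, $(k,p)$ denotes the unique path from $k$ to $p$ (with $(n,n)$ the vertex $n$). The graph inverse semigroup $G(T)$ is the semigroup with zero $0$ generated by the vertices, the edges and formal inverses $e^{-1}$ of edges subject to: for vertices $a,b$: $ab=a$ if $a=b$, else $0$; for edges $e,f$: $s(e)e=er(e)=e$, $e^{-1}s(e)=r(e)e^{-1}=e^{-1}$, $e^{-1}f=r(e)$ if $e=f$, else $0$. For $n\in\omega$, $L_n=\{(n,m)(n,m)^{-1}\mid m\ge n\}\cup\{0\}$. *)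

From HB Require Import structures.
From mathcomp Require Import all_boot.
From mathcomp Require Import all_classical topology.
Set Implicit Arguments. Unset Strict Implicit. Unset Printing Implicit Defensive.
Local Open Scope classical_set_scope.

(* Nonzero elements of G(T) in normal form (a,c)(b,c)^{-1}, a,b <= c,
   where (k,p) is the path from k to p in the unary tree. *)
Record gtel := GTel { ga : nat; gb : nat; gc : nat;
                      gac : (ga <= gc)%N; gbc : (gb <= gc)%N }.

(* G(T): None is the zero 0 *)
Definition GT := option gtel.

(* (a,c)(b,c)^{-1} * (a',c')(b',c')^{-1} = (a, max c c')(b', max c c')^{-1}
   if b = a', and 0 otherwise (standard multiplication of graph inverse
   semigroups specialised to the unary tree). *)
Definition gmul (x y : GT) : GT :=
  match x, y with
  | Some u, Some v =>
      if gb u == ga v then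
        Some (@GTel (ga u) (gb v) (maxn (gc u) (gc v))
                (leq_trans (gac u) (leq_maxl _ _))
                (leq_trans (gbc v) (leq_maxr _ _)))
      else None
  | _, _ => None
  end.

(* the path (k,p), k <= p, as an element of G(T): (k,p) (p,p)^{-1} *)
Definition gpath (k p : nat) (h : (k <= p)%N) : GT :=
  Some (@GTel k p p h (leqnn p)).
(* its formal inverse (k,p)^{-1} = (p,p)(k,p)^{-1} *)
Definition gpath_inv (k p : nat) (h : (k <= p)%N) : GT :=
  Some (@GTel p k p (leqnn p) h).

Definition gvertex (n : nat) : GT := gpath (leqnn n).
Definition gedge (n : nat) : GT := gpath (leqnSn n).
Definition gedge_inv (n : nat) : GT := gpath_inv (leqnSn n).

Definition Lset (n : nat) : set GT :=
  [set x | x = None \/ exists m (h : (n <= m)%N), x = gmul (gpath h) (gpath_inv h)].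

Definition clp_compact (S : topologicalType) : Prop :=
  forall C : set (set S),
    (forall A, C A -> open A /\ closed A) ->
    \bigcup_(A in C) A = setT ->
    exists2 D : set (set S), finite_set D /\ D `<=` C & \bigcup_(A in D) A = setT.

Definition topological_semigroup (S : topologicalType) (mul : S -> S -> S) : Prop :=
  hausdorff_space S /\
  (forall x y z, mul x (mul y z) = mul (mul x y) z) /\
  continuous (fun p : S * S => mul p.1 p.2).

From HB Require Import structures.
From mathcomp Require Import all_boot.
From mathcomp Require Import all_classical topology.
From mathcomp Require Import zify.
Local Open Scope classical_set_scope.

(** Otherwise there are idempotents e_k = (k,m_k)(k,m_k)^{-1} outside U for
    infinitely many k. They are pairwise orthogonal, so an accumulation point
    s of them satisfies both s s = 0 and s s = s, i.e. s = 0, which U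
    excludes; hence they form a closed set. Each e_k is isolated in S: as G(T)
    is dense, it suffices to cut e_k out of G(T) by open conditions on y,
    namely e_k y e_k near e_k and nonzero, f e_k y e_k near
    f := (k,m_k+1)(k,m_k+1)^{-1} (this rules out (k,c)(k,c)^{-1} for c > m_k),
    and y different from the finitely many (k,c)(k,c)^{-1} with k <= c < m_k.
    A closed infinite set of isolated points contradicts CLP-compactness: its
    singletons and its complement form a clopen cover without finite
    subcover. *)

Lemma unbounded_infinite (K : set nat) :
  (forall n, exists2 k, K k & (n < k)%N) -> infinite_set K.
Proof.
move=> unbK /finite_seqP[s Ks]; have [k Kk] := unbK (\max_(i <- s) i).
rewrite Ks /= in Kk; apply/negP; rewrite -leqNgt.
exact: (@leq_bigmax_seq _ _ predT id _ Kk).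
Qed.

Lemma gtelP (u v : gtel) : ga u = ga v -> gb u = gb v -> gc u = gc v -> u = v.
Proof.
case: u => a b c ha hb; case: v => a' b' c' ha' hb' /= ea eb ec.
by subst; congr GTel; exact: eq_irrelevance.
Qed.

(* The idempotent (k,m)(k,m)^{-1}; its third index is [maxn k m] so that no
   proof of [k <= m] is needed. *)
Definition gidem (k m : nat) : GT :=
  Some (@GTel k k (maxn k m) (leq_maxl k m) (leq_maxl k m)).

Lemma gidem_inj k k' m m' :
  gidem k m = gidem k' m' -> k = k' /\ maxn k m = maxn k' m'.
Proof. by case. Qed.

Lemma gmul_gidem k m m' : gmul (gidem k m) (gidem k m') = gidem k (maxn m m').
Proof. by rewrite /gmul /= eqxx; congr Some; apply: gtelP => //=; lia. Qed.

Lemma gmul_gidem_neq k k' m m' :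
  k != k' -> gmul (gidem k m) (gidem k' m') = None.
Proof. by rewrite /gmul /= => /negbTE ->. Qed.

Lemma gpath_mul_inv k m (h : (k <= m)%N) :
  gmul (gpath h) (gpath_inv h) = gidem k m.
Proof. by rewrite /gmul /= eqxx; congr Some; apply: gtelP => //=; lia. Qed.

Lemma Lset_gidem k x :
  Lset k x -> x = None \/ exists2 m, (k <= m)%N & x = gidem k m.
Proof.
by case=> [->|[m [km ->]]]; [left | right; exists m; rewrite ?gpath_mul_inv].
Qed.

Lemma gidem_corner k m x :
  gmul (gmul (gidem k m) x) (gidem k m) <> None ->
  exists2 c, (k <= c)%N & x = gidem k c.
Proof.
case: x => [[a b c ha hb]|] //; rewrite /gmul /=.
case: eqVneq => [ka|] //=; subst a; case: eqVneq => [bk|] //= _; subst b.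
by exists c => //; congr Some; apply: gtelP => //=; lia.
Qed.

Section Accessible.
Context {S : topologicalType}.
Hypothesis S_T1 : accessible_space S.

Lemma nbhs_setC1 (x y : S) : x <> y -> nbhs x (~` [set y]).
Proof.
move=> xy; apply: open_nbhs_nbhs; split => //.
by rewrite openC; exact: accessible_closed_set1.
Qed.

Lemma dense_isolated {D N : set S} {x : S} :
  closure D = setT -> nbhs x N -> D `&` N `<=` [set x] -> nbhs x [set x].
Proof.
move=> denseD Nx DN; apply: filterS (nbhs_interior Nx) => y Ny.
suff : closure [set x] y by apply: accessible_closed_set1.
move=> A Ay; have : closure D y by rewrite denseD.
move=> /(_ _ (filterI Ay Ny)) [z [Dz [Az Nz]]].
by exists z; split => //; exact: DN.
Qed.

Lemma clp_compact_isolated_finite {A : set S} :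
  clp_compact S -> closed A -> (forall x, A x -> nbhs x [set x]) ->
  finite_set A.
Proof.
move=> clpS clA isoA.
have oA : open A by rewrite openE => x Ax; apply: filterS (isoA x Ax) => y ->.
pose C := [set ~` A] `|` (fun x => [set x]) @` A.
have clopenC : forall X, C X -> open X /\ closed X.
  move=> X [->|[x Ax <-]]; split.
  - by rewrite openC.
  - by rewrite closedC.
  - by rewrite openE => y ->; exact: isoA.
  - exact: accessible_closed_set1.
have coverC : \bigcup_(X in C) X = setT.
  apply/seteqP; split => // x _; have [Ax|nAx] := pselect (A x).
    by exists [set x] => //; right; exists x.
  by exists (~` A) => //; left.
have [D [finD DC] coverD] := clpS C clopenC coverC.
have AD : A `<=` (fun x => [set x]) @^-1` D.
  move=> x Ax; have : (\bigcup_(X in D) X) x by rewrite coverD.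
  case=> X DX Xx; have [XA|[y _ yX]] := DC X DX.
    by rewrite XA in Xx.
  by move: Xx DX; rewrite -yX /= => ->.
apply: sub_finite_set AD (finite_preimage _ finD) => x y _ _ xy.
by have : [set x] x by []; rewrite xy.
Qed.

End Accessible.

Section TopologicalSemigroup.
Context {S : topologicalType} {mul : S -> S -> S}.
Hypothesis mul_cont : continuous (fun p : S * S => mul p.1 p.2).

Lemma nbhs_mul a b A : nbhs (mul a b) A ->
  exists P Q, [/\ nbhs a P, nbhs b Q & forall s t, P s -> Q t -> A (mul s t)].
Proof.
move=> /(mul_cont (a, b)) /= [[P Q] [Pa Qb] PQ].
by exists P, Q; split => // s t Ps Qt; exact: (PQ (s, t)).
Qed.

Lemma nbhs_mull a b A : nbhs (mul a b) A -> nbhs b [set t | A (mul a t)].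
Proof.
move=> /nbhs_mul [P [Q [Pa Qb PQ]]]; apply: filterS Qb => t.
exact: PQ (nbhs_singleton Pa).
Qed.

Lemma nbhs_mulr a b A : nbhs (mul a b) A -> nbhs a [set s | A (mul s b)].
Proof.
move=> /nbhs_mul [P [Q [Pa Qb PQ]]]; apply: filterS Pa => s Ps.
exact: PQ Ps (nbhs_singleton Qb).
Qed.

Lemma closure_orthogonal_idempotents {B : set S} {z : S} :
  hausdorff_space S ->
  (forall x, B x -> mul x x = x) ->
  (forall x y, B x -> B y -> x <> y -> mul x y = z) ->
  closure B `<=` B `|` [set z].
Proof.
move=> S_T2 idemB orthB s clBs; have [Bs|nBs] := pselect (B s).
  by left.
right.
have limBs : limit_point B s.
  move=> W Ws; have [y [By Wy]] := clBs W Ws.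
  by exists y; split => //; apply/eqP => ys; apply: nBs; rewrite -ys.
have twoB : forall W, nbhs s W -> exists x y, [/\ x <> y, B x, B y, W x & W y].
  move=> W Ws; have [x [/eqP xs Bx Wx]] := limBs W Ws.
  have sx : nbhs s (~` [set x]).
    by apply: (nbhs_setC1 (hausdorff_accessible S_T2)) => sx; apply: xs.
  have [y [/eqP ys By [Wy yx]]] := limBs _ (filterI Ws sx).
  by exists x, y; split => // xy; apply: yx.
have ss_z : mul s s = z.
  apply: S_T2 => A C /nbhs_mul [P [Q [Ps Qs PQ]]] Cz.
  have [x [y [xy Bx By [Px _] [_ Qy]]]] := twoB _ (filterI Ps Qs).
  exists z; split; last exact: nbhs_singleton.
  by rewrite -(orthB x y) //; exact: PQ.
have ss_s : mul s s = s.
  apply: S_T2 => A C /nbhs_mul [P [Q [Ps Qs PQ]]] Cs.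
  have [x [_ Bx [[Px Qx] Cx]]] := limBs _ (filterI (filterI Ps Qs) Cs).
  by exists x; split => //; rewrite -(idemB x Bx); exact: PQ.
by rewrite /= -ss_s ss_z.
Qed.

End TopologicalSemigroup.

Section DenseEmbedding.
Context {S : topologicalType} {mul : S -> S -> S} {emb : GT -> S}.
Hypotheses (S_T2 : hausdorff_space S)
  (mul_cont : continuous (fun p : S * S => mul p.1 p.2))
  (emb_inj : injective emb)
  (emb_mul : forall x y, emb (gmul x y) = mul (emb x) (emb y))
  (emb_dense : closure (range emb) = setT).

Lemma emb_gidem_isolated k m :
  (k <= m)%N -> nbhs (emb (gidem k m)) [set emb (gidem k m)].
Proof.
move=> km; have S_T1 := hausdorff_accessible S_T2.
set e := emb (gidem k m); set f := emb (gidem k m.+1).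
have := S_T2; rewrite open_hausdorff => /(_ e f) [|[Ae Af] /=].
  by apply/eqP => /emb_inj /gidem_inj [_]; lia.
rewrite !inE => -[eAe fAf] [oAe oAf AeAf].
have eee : mul (mul e e) e = e by rewrite -!emb_mul !gmul_gidem !maxnn.
have fe : mul f e = f.
  by rewrite -emb_mul gmul_gidem; congr (emb (gidem _ _)); lia.
have N1 : nbhs e [set y | (Ae `&` ~` [set emb None]) (mul (mul e y) e)].
  have : nbhs (mul (mul e e) e) (Ae `&` ~` [set emb None]).
    rewrite eee; apply: filterI; first exact: open_nbhs_nbhs.
    by apply: nbhs_setC1 => // /emb_inj.
  by move/(nbhs_mulr mul_cont)/(nbhs_mull mul_cont).
have N2 : nbhs e [set y | Af (mul f (mul (mul e y) e))].
  have : nbhs (mul f (mul (mul e e) e)) Af.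
    by rewrite eee fe; exact: open_nbhs_nbhs.
  by move/(nbhs_mull mul_cont)/(nbhs_mulr mul_cont)/(nbhs_mull mul_cont).
pose below := [set emb (gidem k r) | r in [set r | (k <= r < m)%N]].
have N3 : nbhs e (~` below).
  apply: open_nbhs_nbhs; split; last first.
    by case=> r /andP [kr rm] /emb_inj /gidem_inj [_]; lia.
  rewrite openC; apply: (accessible_finite_set_closed.1 S_T1).
  apply: finite_image; apply: sub_finite_set (finite_II m).
  by move=> r /andP [].
apply: (dense_isolated S_T1 emb_dense (filterI (filterI N1 N2) N3)).
move=> _ [[g _ <-] [[/= N1g N2g] N3g]].
rewrite -!emb_mul in N1g N2g.
have [c kc gE] : exists2 c, (k <= c)%N & g = gidem k c.
  by apply: (@gidem_corner k m) => E; case: N1g => _; rewrite E.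
subst g.
rewrite !gmul_gidem in N1g N2g.
case: (ltngtP c m) => [cm|mc|-> //].
  by exfalso; apply: N3g; exists c => //; apply/andP.
have [E1 E2] : maxn (maxn m c) m = c /\ maxn m.+1 c = c by split; lia.
rewrite E1 E2 in N1g N2g.
have : (Ae `&` Af) (emb (gidem k c)) by split; [exact: N1g.1 | exact: N2g].
by rewrite AeAf.
Qed.

Lemma gidem_family_finite (K : set nat) (g : nat -> nat) :
  clp_compact S -> (forall k, K k -> (k <= g k)%N) ->
  ~ closure [set emb (gidem k (g k)) | k in K] (emb None) -> finite_set K.
Proof.
move=> clpS Kg nclB0; pose b k := emb (gidem k (g k)); pose B := b @` K.
have b_inj : injective b by move=> k l /emb_inj /gidem_inj [].
have idemB : forall x, B x -> mul x x = x.
  by move=> _ [k _ <-]; rewrite -emb_mul gmul_gidem maxnn.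
have orthB : forall x y, B x -> B y -> x <> y -> mul x y = emb None.
  move=> _ _ [k _ <-] [l _ <-] bkl; rewrite -emb_mul gmul_gidem_neq //.
  by apply/eqP => kl; apply: bkl; rewrite kl.
have clB : closed B.
  move=> s /[dup] clBs.
  case/(closure_orthogonal_idempotents mul_cont S_T2 idemB orthB) => // sE.
  by exfalso; apply: nclB0; rewrite -sE.
have isoB : forall x, B x -> nbhs x [set x].
  by move=> _ [k Kk <-]; exact: emb_gidem_isolated (Kg k Kk).
have finB :=
  clp_compact_isolated_finite (hausdorff_accessible S_T2) clpS clB isoB.
apply: sub_finite_set (finite_preimage _ finB); first by move=> k Kk; exists k.
by move=> k l _ _; exact: b_inj.
Qed.

End DenseEmbedding.

Theorem lemma4p6 (S : topologicalType) (mul : S -> S -> S) (emb : GT -> S) :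
  topological_semigroup mul ->
  clp_compact S ->
  injective emb ->
  (forall x y : GT, emb (gmul x y) = mul (emb x) (emb y)) ->
  closure (range emb) = setT ->
  forall U : set S, open U -> U (emb None) ->
  exists n : nat, forall k : nat, (n < k)%N -> emb @` Lset k `<=` U.
Proof.
move=> [S_T2 [_ mul_cont]] clpS emb_inj emb_mul emb_dense U oU U0.
apply: contrapT => noN.
pose K := [set k | exists2 m, (k <= m)%N & ~ U (emb (gidem k m))].
have unbK : forall n, exists2 k, K k & (n < k)%N.
  move=> n; apply: contrapT => nK; apply: noN; exists n => k nk _ [x Lx <-].
  case/Lset_gidem: Lx => [->|[m km ->]] //.
  by apply: contrapT => nU; apply: nK; exists k => //; exists m.
have /choice [g Kg] :
    forall k, exists m, K k -> (k <= m)%N /\ ~ U (emb (gidem k m)).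
  move=> k; have [[m km nU]|nKk] := pselect (K k).
    by exists m.
  by exists 0%N => /nKk.
apply: (unbounded_infinite _ unbK).
apply: (gidem_family_finite S_T2 mul_cont emb_inj emb_mul emb_dense K g clpS).
  by move=> k /Kg [].
move=> /(_ U (open_nbhs_nbhs (conj oU U0))) [_ [[k Kk <-] Ubk]].
by case: (Kg k Kk).
Qed.
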